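(* Let $X=A_1\oplus\cdots\oplus A_c=(V,E)$ be an additive product graph, let $p\ge 1$, and let $(\boldsymbol{\gamma},\boldsymbol{\beta})$ be any depth-$p$ ma-QAOA parameters with one angle $\gamma_{j,C}$ per layer $j\in[p]$ and edge category $C\in[c]$ and one angle $\beta_j$ per layer. Fix $C\in[c]$ and an edge $\{u,v\}$ of $\underline{A}_C$. Then the value $\langle\boldsymbol{\gamma},\boldsymbol{\beta}|Z_xZ_y|\boldsymbol{\gamma},\boldsymbol{\beta}\rangle$ is the same for every edge $\{x,y\}$ of $X$ of type $(C,\{u,v\})$, i.e. for all edges of the forms $\{v_1,v_1Cv\}$ (when $u=v_1$), $\{sCu,sCv\}$ (for any admissible string $s$), and $\{sC'w\,,\,sC'wCv\}$-type edges $\{s C' u, sC'uCv\}$ (for any admissible string $s$ and any $C'\neq C$). Consequently each edge $\{u,v\}$ of each $\underline{A}_C$ determines a single value, denoted $-\mathbb{E}[\underline{A}_C(u,v)]$ (so that $\mathbb{E}[\underline{A}_C(u,v)]=-\langle Z_xZ_y\rangle$ for any edge $\{x,y\}$ of type $(C,\{u,v\})$), and all such edges have isomorphic radius-$p$ neighborhoods in $X$ (isomorphic as category-labelled graphs).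
   Context: Additive product graph. Let $n,c\ge1$ and let $A_1,\dots,A_c$ be graphs (''plain atoms'') on the common vertex set $[n]=\{1,\dots,n\}$. Let $\underline{A}_j$ denote $A_j$ with its isolated vertices removed; assume each $\underline{A}_j$ is nonempty and connected and that the union graph $([n],E(A_1)\cup\cdots\cup E(A_c))$ is connected. Fix $v_1\in[n]$. The additive product graph $X=A_1\oplus\cdots\oplus A_c=(V,E)$ has as vertex set $V$ the set of strings $v_1C_1v_2C_2\cdots v_kC_kv_{k+1}$ ($k\ge0$) with each $v_i\in[n]$, each $C_i\in[c]$, $C_i\neq C_{i+1}$ for $i<k$, and $v_i,v_{i+1}$ both vertices of $\underline{A}_{C_i}$ for all $i\le k$. Its edge set $E$ consists of (all strings involved being required to lie in $V$, $s$ denoting a prefix string): (i) $\{sCu,sCv\}$ whenever $\{u,v\}$ is an edge of $\underline{A}_C$; (ii) $\{sC'u,\,sC'uCv\}$ whenever $\{u,v\}$ is an edge of $\underline{A}_{C}$ (with $C\ne C'$); (iii) $\{v_1,v_1Cv\}$ whenever $\{v_1,v\}$ is an edge of $\underline{A}_C$. An edge of $X$ produced in (i), (ii) or (iii) from the edge $\{u,v\}$ of $\underline{A}_C$ (with $u=v_1$ in (iii)) is said to be of type $(C,\{u,v\})$ and of category $C$. ma-QAOA on $X$. Parameters: $\gamma_{j,C}\in[0,2\pi]$ for $j\in[p]$, $C\in[c]$, and $\beta_j\in[0,2\pi]$ for $j\in[p]$. For a finite graph $H$ whose edges carry categories $c(e)\in[c]$, the ma-QAOA state is $|\boldsymbol{\gamma},\boldsymbol{\beta}\rangle=e^{-i\beta_pB}e^{-iC_{p}}\cdots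 e^{-i\beta_1B}e^{-iC_{1}}|+\rangle^{\otimes V(H)}$, where $B=\sum_{v}X_v$ and $C_j=-\sum_{\{u,v\}\in E(H)}\gamma_{j,c(\{u,v\})}Z_uZ_v$ ($X_v,Z_v$ Pauli operators on qubit $v$). For an edge $\{x,y\}$ of the infinite graph $X$, $\langle\boldsymbol{\gamma},\boldsymbol{\beta}|Z_xZ_y|\boldsymbol{\gamma},\boldsymbol{\beta}\rangle$ is defined as this expectation computed on the finite subgraph of $X$ induced by the vertices at graph distance at most $p$ from $\{x,y\}$ (with inherited categories). Standard QAOA is the special case $\gamma_{j,1}=\cdots=\gamma_{j,c}$ for all $j$. *)

From mathcomp Require Import all_boot all_order all_algebra.
From mathcomp Require Import reals trigo.
From mathcomp Require Import complex.
Import GRing.Theory Num.Theory.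

Set Implicit Arguments.
Unset Strict Implicit.
Unset Printing Implicit Defensive.

(* Vertices of [n] are 'I_n (0-based), categories [c] are 'I_c.       *)
(* A string v1 C1 v2 C2 ... vk Ck v(k+1) is encoded by the list        *)
(*   [:: (Ck, v(k+1)); ...; (C2, v3); (C1, v2)]                        *)
(* (most recent letter first); the leading v1 is implicit.             *)
(* So  s C u  (string s extended by C u)  is  (C, u) :: s.             *)

Section AdditiveProduct.

Variables (n c : nat) (A : 'I_c -> rel 'I_n) (v1 : 'I_n).

Definition str := seq ('I_c * 'I_n).

(* w is a vertex of underline(A_C), i.e. non-isolated in A_C *)
Definition in_under (C : 'I_c) (w : 'I_n) : bool := [exists w', A C w w'].

Definition lastv (s : str) : 'I_n := if s is (_, w) :: _ then w else v1.

Fixpoint validstr (s : str) : bool :=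
  match s with
  | [::] => true
  | (C, w) :: t =>
      [&& validstr t,
          in_under C (lastv t), in_under C w,
          w != lastv t &
          (if t is (C', _) :: _ then C != C' else true)]
  end.

(* edges of X produced from the edge {u,v} of A_C, with x, y in this order *)
Definition typed_i (C : 'I_c) (u v : 'I_n) (x y : str) : bool :=
  (x == (C, u) :: behead x) && (y == (C, v) :: behead x).
Definition typed_ii (C : 'I_c) (u v : 'I_n) (x y : str) : bool :=
  [exists C' : 'I_c, [&& C' != C, x == (C', u) :: behead x & y == (C, v) :: x]].
Definition typed_iii (C : 'I_c) (u v : 'I_n) (x y : str) : bool :=
  [&& u == v1, x == [::] & y == [:: (C, v)]].
Definition typed (C : 'I_c) (u v : 'I_n) (x y : str) : bool :=
  [|| typed_i C u v x y, typed_ii C u v x y | typed_iii C u v x y].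

Definition edge_from (C : 'I_c) (u v : 'I_n) (x y : str) : bool :=
  [&& validstr x, validstr y, A C u v & typed C u v x y || typed C u v y x].

Definition has_type (C : 'I_c) (u v : 'I_n) (x y : str) : bool :=
  edge_from C u v x y || edge_from C v u x y.

Definition adjC (C : 'I_c) (x y : str) : bool :=
  [exists u : 'I_n, exists v : 'I_n, has_type C u v x y].

Definition adjX (x y : str) : bool := [exists C : 'I_c, adjC C x y].

(* every neighbour of r in X is a child, a sibling or the parent of r;
   neighbours r is the (finite) list of neighbours of r in X *)
Definition candidates (r : str) : seq str :=
  [seq a :: r | a : 'I_c * 'I_n] ++
  (if r is a :: s then s :: [seq (a.1, w) :: s | w : 'I_n] else [::]).
Definition neighbours (r : str) : seq str := [seq z <- candidates r | adjX r z].

Definition ball_step (S : seq str) : seq str :=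
  undup (S ++ flatten (map neighbours S)).
Definition ball (k : nat) (x y : str) : seq str :=
  iter k ball_step (undup [:: x; y]).

Definition nbhd_iso (B B' : seq str) (x y x' y' : str) : Prop :=
  exists f : str -> str,
    [/\ {in B &, injective f}, perm_eq (map f B) B',
        {in B &, forall a b, forall C, adjC C (f a) (f b) = adjC C a b} &
        (f x = x' /\ f y = y') \/ (f x = y' /\ f y = x')].

End AdditiveProduct.

(* ma-QAOA on a finite graph with vertex set 'I_N and category-C edge  *)
(* relation E C (each edge {i,k}, i<k, listed once).                   *)
(* Basis states: z : {ffun 'I_N -> bool}; Z_i z = (-1)^(z i).          *)

Section MaQAOA.

Local Open Scope ring_scope.
Variables (R : realType) (c p N : nat).
Variable E : 'I_c -> 'I_N -> 'I_N -> bool.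
Variables (gamma : 'I_p -> 'I_c -> R) (beta : 'I_p -> R).

Definition spin (b : bool) : R := if b then -1 else 1.

Definition state := {ffun {ffun 'I_N -> bool} -> R[i]}.

(* eigenvalue of C_j = - sum_{edges} gamma_{j,c(e)} Z_u Z_v on z *)
Definition costval (j : 'I_p) (z : {ffun 'I_N -> bool}) : R :=
  - \sum_(C < c) \sum_(i < N) \sum_(k < N | (i < k)%N)
      (E C i k)%:R * gamma j C * spin (z i) * spin (z k).

(* e^{-i C_j} (diagonal) *)
Definition phase_op (j : 'I_p) (psi : state) : state :=
  [ffun z : {ffun 'I_N -> bool} => Complex (cos (costval j z)) (- sin (costval j z)) * psi z].

(* e^{-i beta B} = tensor product over qubits of (cos beta I - i sin beta X) *)
Definition mixer_op (j : 'I_p) (psi : state) : state :=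
  [ffun z : {ffun 'I_N -> bool} => \sum_(z' : {ffun 'I_N -> bool})
     (\prod_(i < N) (if z i == z' i then Complex (cos (beta j)) 0
                     else Complex 0 (- sin (beta j)))) * psi z'].

Definition plus_state : state :=
  [ffun => Complex ((Num.sqrt (2 : R))^-1 ^+ N) 0].

(* |gamma,beta> = e^{-i b_p B} e^{-i C_p} ... e^{-i b_1 B} e^{-i C_1} |+> *)
Definition qaoa_state : state :=
  foldl (fun psi j => mixer_op j (phase_op j psi)) plus_state (enum 'I_p).

Definition bit (z : {ffun 'I_N -> bool}) (k : nat) : bool :=
  [exists i : 'I_N, (val i == k) && z i].

Definition ZZ_expect (i k : nat) : R :=
  \sum_(z : {ffun 'I_N -> bool})
     (let: Complex a b := qaoa_state z in a ^+ 2 + b ^+ 2)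
       * spin (bit z i) * spin (bit z k).

End MaQAOA.

(* <gamma,beta| Z_x Z_y |gamma,beta> for an edge {x,y} of X, computed on the
   subgraph of X induced by the vertices at distance <= p from {x,y} *)
Definition X_ZZ (R : realType) (n c : nat) (A : 'I_c -> rel 'I_n) (v1 : 'I_n)
    (p : nat) (gamma : 'I_p -> 'I_c -> R) (beta : 'I_p -> R) (x y : str n c) : R :=
  let B := ball A v1 p x y in
  let E := fun (C : 'I_c) (i k : 'I_(size B)) =>
             adjC A v1 C (nth [::] B i) (nth [::] B k) in
  ZZ_expect E gamma beta (index x B) (index y B).

From mathcomp Require Import all_boot all_order all_algebra fingroup perm.
From mathcomp Require Import reals trigo.
From mathcomp Require Import complex.
Import GRing.Theory Num.Theory.

(* The additive product graph looks the same from each of its vertices.  If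
   [{r, w}] is an edge of [A D], [reroot D r w] turns the graph based at [r]
   into the graph based at [w]; iterating it along the letters of a string [a]
   moves [a] to the root and every category-[C] neighbour [b] of [a] to the
   one-letter string [C (lastv b)].  Composing two such moves yields a
   category-preserving automorphism of X carrying one edge of type
   [(C, {u, v})] onto any other.  It maps the radius-[p] ball around the first
   edge onto the ball around the second, and the ma-QAOA expectation of
   [Z_x Z_y] only depends on the category-labelled ball up to a relabelling
   of its qubits. *)

Set Implicit Arguments.
Unset Strict Implicit.
Unset Printing Implicit Defensive.

Section AdditiveProductGraph.

Variables (n c : nat) (A : 'I_c -> rel 'I_n).
Hypotheses (A_sym : forall C, symmetric (A C)) (A_irr : forall C, irreflexive (A C)).
Local Notation str := (str n c).

(* [y] is a [C]-sibling or a [C]-child of [x], in the graph rooted at [r]. *)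
Definition arc (r : 'I_n) (C : 'I_c) (x y : str) : bool :=
  (match x, y with
   | (C1, a) :: t, (C2, b) :: t2 => [&& C1 == C, C2 == C, t2 == t & A C a b]
   | _, _ => false
   end)
  || (if y is (C2, b) :: t2 then [&& C2 == C, t2 == x & A C (lastv r x) b]
      else false).

Lemma validstr_cons r C a t : validstr A r ((C, a) :: t) =
  [&& validstr A r t, in_under A C (lastv r t), in_under A C a, a != lastv r t &
      (if t is (C', _) :: _ then C != C' else true)].
Proof. by []. Qed.

Lemma edge_from_arc r C u v x y :
  edge_from A r C u v x y -> arc r C x y || arc r C y x.
Proof.
case/and4P=> _ _ Auv /orP[] /or3P[].
- by case/andP=> /eqP-> /eqP->; rewrite /arc /= !eqxx Auv.
- by case/existsP=> C' /and3P[_ /eqP-> /eqP->]; rewrite /arc /= !eqxx Auv ?orbT.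
- by case/and3P=> /eqP eu /eqP-> /eqP->; rewrite /arc /= eqxx -eu Auv ?orbT.
- by case/andP=> /eqP-> /eqP->; rewrite /arc /= !eqxx Auv ?orbT.
- by case/existsP=> C' /and3P[_ /eqP-> /eqP->]; rewrite /arc /= !eqxx Auv ?orbT.
- by case/and3P=> /eqP eu /eqP-> /eqP->; rewrite /arc /= eqxx -eu Auv ?orbT.
Qed.

Lemma arc_edge_from r C x y : validstr A r x -> validstr A r y -> arc r C x y ->
  exists u v, edge_from A r C u v x y.
Proof.
move=> Vx Vy /orP[].
  case: x Vx => [|[C1 a] t] // Vx; case: y Vy => [|[C2 b] t2] // Vy.
  case/and4P=> /eqP eC1 /eqP eC2 /eqP et Aab; subst C1 C2 t2.
  by exists a, b; rewrite /edge_from Vx Vy Aab /typed /typed_i /= !eqxx.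
case: y Vy => [|[C2 b] t2] // Vy /and3P[/eqP eC2 /eqP et Ab]; subst C2 t2.
case: x Vx Vy Ab => [|[C1 a] t] Vx Vy Ab.
  by exists r, b; rewrite /edge_from Vx Vy Ab /typed /typed_iii !eqxx ?orbT.
exists a, b; rewrite /edge_from Vx Vy Ab /typed /typed_ii.
move: Vy; rewrite validstr_cons => /and5P[_ _ _ _ neC].
by apply/orP; left; apply/or3P/Or32/existsP; exists C1; rewrite eq_sym neC !eqxx.
Qed.

Lemma adjCE r C x y :
  adjC A r C x y = [&& validstr A r x, validstr A r y & arc r C x y || arc r C y x].
Proof.
apply/existsP/and3P => [[u /existsP[v /orP[] Hxy]] | [Vx Vy]];
  try by rewrite (edge_from_arc Hxy); case/and4P: Hxy => -> ->.
case/orP=> [/(arc_edge_from Vx Vy)|/(arc_edge_from Vy Vx)] [u [v Hxy]];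
  exists u; apply/existsP; exists v; apply/orP; left => //.
case/and4P: Hxy => _ _ Auv Hxy.
by rewrite /edge_from Vx Vy Auv orbC Hxy.
Qed.

Lemma adjC_sym r C x y : adjC A r C x y = adjC A r C y x.
Proof. by rewrite !adjCE andbCA orbC. Qed.

Lemma adjC_valid r C x y : adjC A r C x y -> validstr A r x && validstr A r y.
Proof. by rewrite adjCE => /and3P[-> -> _]. Qed.

Lemma adjX_valid r x y : adjX A r x y -> validstr A r x && validstr A r y.
Proof. by case/existsP=> C /adjC_valid. Qed.

Lemma adjC_nil r C z : adjC A r C [::] z -> z = [:: (C, lastv r z)].
Proof.
rewrite adjCE => /and3P[_ _ /orP[]]; rewrite /arc /=.
  by case: z => [|[C2 b] t2] // /and3P[/eqP-> /eqP-> _].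
by case: z => [|[C2 b] t2] //; rewrite orbF.
Qed.

(* For an edge [{r, w}] of [A D], [reroot D r w] sends strings based at [r] to
   strings based at [w]: a bottom letter [D w] is cancelled, a bottom letter
   [D a] with [a != w] is kept, and [D r] is put under any other string. *)
Fixpoint reroot (D : 'I_c) (r w : 'I_n) (s : str) : str :=
  match s with
  | [::] => [:: (D, r)]
  | (C, a) :: t =>
      if nilp t && (C == D) then (if a == w then [::] else [:: (C, a)])
      else (C, a) :: reroot D r w t
  end.

Lemma lastv_reroot D r w s : lastv w (reroot D r w s) = lastv r s.
Proof. by case: s => [|[C a] [|? ?]] //=; case: ifP => // _; case: eqP. Qed.

Lemma reroot_rcons D r w s : reroot D r w (rcons s (D, w)) = s.
Proof.
elim: s => [|[C a] [|b s] IH] /=; rewrite ?eqxx //.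
by rewrite -[in RHS]IH.
Qed.

Lemma reroot_cons D r w C a t : ~~ (nilp t && (C == D)) ->
  reroot D r w ((C, a) :: t) = (C, a) :: reroot D r w t.
Proof. by move=> /negbTE /= ->. Qed.

Lemma reroot_head_cat D r w C a t :
  if reroot D r w ((C, a) :: t) is (C', _) :: _ then C' == C else true.
Proof. by case: t => [|? ?] /=; rewrite ?eqxx //; do 2?case: ifP; rewrite /= ?eqxx. Qed.

Lemma reroot_arc D r w C x y : arc r C x y ->
  arc w C (reroot D r w x) (reroot D r w y) || arc w C (reroot D r w y) (reroot D r w x).
Proof.
case/orP.
  case: x => [|[C1 a] t] //; case: y => [|[C2 b] t2] //.
  case/and4P=> /eqP eC1 /eqP eC2 /eqP et Aab; subst C1 C2 t2.
  have [/andP[/nilP et /eqP eCD]|ne] := boolP (nilp t && (C == D)).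
    subst t C; rewrite /= !eqxx /=.
    have [eaw|naw] := eqVneq a w; have [ebw|nbw] := eqVneq b w.
    - by subst; rewrite A_irr in Aab.
    - by subst; rewrite /arc /= !eqxx Aab ?orbT.
    - by subst; rewrite /arc /= !eqxx A_sym Aab ?orbT.
    - by rewrite /arc /= !eqxx Aab.
  by rewrite !reroot_cons // /arc !eqxx Aab.
case: y => [|[C2 b] t2] // /and3P[/eqP eC2 /eqP et Ab]; subst C2 t2.
have [/andP[/nilP ex /eqP eCD]|ne] := boolP (nilp x && (C == D)).
  subst x C; rewrite /= !eqxx /=.
  have [ebw|nbw] := eqVneq b w; last by rewrite /arc /= !eqxx Ab.
  by subst b; rewrite /arc /= !eqxx A_sym Ab ?orbT.
by rewrite reroot_cons // /arc /= !eqxx lastv_reroot Ab ?orbT.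
Qed.

Lemma validstr_letter_sym D r w :
  validstr A r [:: (D, w)] -> validstr A w [:: (D, r)].
Proof. by rewrite !validstr_cons /= => /and4P[-> -> ne _]; rewrite eq_sym ne. Qed.

Section Reroot.

Variables (D : 'I_c) (r w : 'I_n).
Hypothesis rw : validstr A r [:: (D, w)].

Lemma reroot_valid s : validstr A r s -> validstr A w (reroot D r w s).
Proof.
elim: s => [_|[C a] t IH]; first exact: validstr_letter_sym.
rewrite validstr_cons => /and5P[Vt uC aC ne neC].
move: rw; rewrite validstr_cons /= => /and4P[rD wD nwr _].
case: t Vt uC ne neC IH => [|[C' a'] t'] Vt uC ne neC IH.
  rewrite /= in uC ne *; have [eCD|nCD] := eqVneq C D.
    subst C; have [//|naw] := eqVneq a w.
    by rewrite validstr_cons /= wD aC naw.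
  by rewrite validstr_cons /= (eq_sym r w) nwr wD rD uC aC ne nCD.
have -> : nilp ((C', a') :: t') = false by [].
rewrite andFb validstr_cons IH // lastv_reroot uC aC ne.
move: (reroot_head_cat D r w C' a' t').
by case: (reroot D r w _) => [|[C'' a''] t''] // /eqP->.
Qed.

Lemma rerootK s : validstr A r s -> reroot D w r (reroot D r w s) = s.
Proof.
elim: s => [|[C a] t IH]; first by rewrite /= !eqxx.
rewrite validstr_cons => /and5P[Vt uC aC ne neC].
case: t Vt uC ne neC IH => [|[C' a'] t'] Vt uC ne neC IH.
  rewrite /= in uC ne *; have [eCD|nCD] := eqVneq C D.
    subst C; have [->|naw] := eqVneq a w; first by rewrite /= ?eqxx.
    by rewrite /= eqxx (negbTE ne).
  by rewrite /= !eqxx ?(negbTE nCD).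
rewrite (@reroot_cons D r w C a) //.
move: (reroot_head_cat D r w C' a' t') (IH Vt).
case: (reroot D r w _) => [|[C'' a''] t''] //.
  move=> _ /= [eD ew et]; case: eqP => [eCD|_]; last by rewrite eD ew et.
  by move: neC; rewrite eCD eD eqxx.
by move=> /eqP eC'' <-; rewrite reroot_cons // eC''.
Qed.

Lemma adjC_reroot_impl C x y :
  adjC A r C x y -> adjC A w C (reroot D r w x) (reroot D r w y).
Proof.
rewrite !adjCE => /and3P[Vx Vy /orP[]] Hxy; rewrite !reroot_valid //=.
  exact: reroot_arc.
by rewrite orbC; apply: reroot_arc.
Qed.

End Reroot.

Lemma adjC_reroot D r w C x y : validstr A r [:: (D, w)] ->
  validstr A r x -> validstr A r y ->
  adjC A w C (reroot D r w x) (reroot D r w y) = adjC A r C x y.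
Proof.
move=> rw Vx Vy; apply/idP/idP; last exact: adjC_reroot_impl.
by move/(adjC_reroot_impl (validstr_letter_sym rw)); rewrite !rerootK.
Qed.

(* [recenter rho a] reroots along the letters of [a], moving [a] to the root
   [[::]] of the graph based at [lastv rho a]; [uncenter rho a] undoes it. *)
Fixpoint recenter (rho : 'I_n) (a s : str) : str :=
  if a is (D, w) :: t then reroot D (lastv rho t) w (recenter rho t s) else s.

Fixpoint uncenter (rho : 'I_n) (a s : str) : str :=
  if a is (D, w) :: t then uncenter rho t (reroot D w (lastv rho t) s) else s.

Lemma validstr_cons_inv rho D w t : validstr A rho ((D, w) :: t) ->
  validstr A (lastv rho t) [:: (D, w)] /\ validstr A rho t.
Proof.
by rewrite validstr_cons => /and5P[Vt uD wD ne _]; rewrite validstr_cons /= uD wD ne.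
Qed.

Lemma recenter_cat rho a s : recenter rho a (s ++ a) = s.
Proof.
elim: a s => [|[D w] t IH] s /=; first by rewrite cats0.
by rewrite -cat_rcons IH reroot_rcons.
Qed.

Lemma recenter_self rho a : recenter rho a a = [::].
Proof. exact: (recenter_cat rho a [::]). Qed.

Lemma lastv_recenter rho a s : lastv (lastv rho a) (recenter rho a s) = lastv rho s.
Proof. by elim: a => [|[D w] t IH] //=; rewrite lastv_reroot IH. Qed.

Lemma recenter_valid rho a s : validstr A rho a -> validstr A rho s ->
  validstr A (lastv rho a) (recenter rho a s).
Proof.
elim: a => [|[D w] t IH] // /validstr_cons_inv[tw Vt] Vs /=.
exact: reroot_valid tw _ (IH Vt Vs).
Qed.

Lemma uncenter_valid rho a s : validstr A rho a -> validstr A (lastv rho a) s ->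
  validstr A rho (uncenter rho a s).
Proof.
elim: a s => [|[D w] t IH] s // /validstr_cons_inv[tw Vt] Vs /=.
exact: IH _ Vt (reroot_valid (validstr_letter_sym tw) Vs).
Qed.

Lemma recenterK rho a s : validstr A rho a -> validstr A rho s ->
  uncenter rho a (recenter rho a s) = s.
Proof.
elim: a => [|[D w] t IH] // /validstr_cons_inv[tw Vt] Vs /=.
by rewrite rerootK ?IH // recenter_valid.
Qed.

Lemma uncenterK rho a s : validstr A rho a -> validstr A (lastv rho a) s ->
  recenter rho a (uncenter rho a s) = s.
Proof.
elim: a s => [|[D w] t IH] s // /validstr_cons_inv[tw Vt] Vs /=.
by rewrite IH ?rerootK // (reroot_valid (validstr_letter_sym tw)).
Qed.

Lemma adjC_recenter rho a C x y :
  validstr A rho a -> validstr A rho x -> validstr A rho y ->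
  adjC A (lastv rho a) C (recenter rho a x) (recenter rho a y) = adjC A rho C x y.
Proof.
elim: a => [|[D w] t IH] // /validstr_cons_inv[tw Vt] Vx Vy /=.
by rewrite adjC_reroot ?IH // recenter_valid.
Qed.

Lemma recenter_neighbour rho a C b : validstr A rho a ->
  adjC A rho C a b -> recenter rho a b = [:: (C, lastv rho b)].
Proof.
move=> Va Hab; have /andP[_ Vb] := adjC_valid Hab.
move: Hab; rewrite -(adjC_recenter C Va Va Vb) recenter_self => /adjC_nil->.
by rewrite lastv_recenter.
Qed.

Definition is_Xaut (rho : 'I_n) (f g : str -> str) : Prop :=
  [/\ {homo f : s / validstr A rho s}, {homo g : s / validstr A rho s},
      (forall s, validstr A rho s -> g (f s) = s),
      (forall s, validstr A rho s -> f (g s) = s) &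
      (forall C x y, validstr A rho x -> validstr A rho y ->
         adjC A rho C (f x) (f y) = adjC A rho C x y)].

Lemma recenter_Xaut rho a a' : validstr A rho a -> validstr A rho a' ->
  lastv rho a = lastv rho a' ->
  is_Xaut rho (uncenter rho a' \o recenter rho a) (uncenter rho a \o recenter rho a').
Proof.
move=> Va Va' ea.
have fV s : validstr A rho s -> validstr A rho (uncenter rho a' (recenter rho a s)).
  by move=> Vs; apply: uncenter_valid; rewrite // -ea recenter_valid.
have gV s : validstr A rho s -> validstr A rho (uncenter rho a (recenter rho a' s)).
  by move=> Vs; apply: uncenter_valid; rewrite // ea recenter_valid.
split=> // [s Vs | s Vs | C x y Vx Vy] /=.
- by rewrite uncenterK ?recenterK // -ea recenter_valid.
- by rewrite uncenterK ?recenterK // ea recenter_valid.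
rewrite -(adjC_recenter C Va' (fV _ Vx) (fV _ Vy)) !uncenterK -?ea ?adjC_recenter //;
  exact: recenter_valid.
Qed.

Lemma edge_Xaut rho C a b a' b' : adjC A rho C a b -> adjC A rho C a' b' ->
  lastv rho a = lastv rho a' -> lastv rho b = lastv rho b' ->
  exists f g, [/\ is_Xaut rho f g, f a = a' & f b = b'].
Proof.
move=> Hab Hab' ea eb.
have /andP[Va _] := adjC_valid Hab; have /andP[Va' Vb'] := adjC_valid Hab'.
exists (uncenter rho a' \o recenter rho a), (uncenter rho a \o recenter rho a').
split; first exact: recenter_Xaut.
  by rewrite /= recenter_self -(recenter_self rho a') recenterK.
by rewrite /= (recenter_neighbour Va Hab) eb -(recenter_neighbour Va' Hab') recenterK.
Qed.

Lemma adjX_Xaut rho f g x y : is_Xaut rho f g ->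
  validstr A rho x -> validstr A rho y -> adjX A rho (f x) (f y) = adjX A rho x y.
Proof. by case=> _ _ _ _ fadj Vx Vy; apply: eq_existsb => C; apply: fadj. Qed.

Lemma candidates_adjX rho r z : adjX A rho r z -> z \in candidates r.
Proof.
case/existsP=> C; rewrite adjCE => /and3P[_ _ /orP[] /orP[]].
- case: r => [|[C1 a] t] //; case: z => [|[C2 b] t2] //.
  case/and4P=> /eqP-> /eqP-> /eqP-> _.
  by rewrite /candidates mem_cat inE; apply/orP; right; apply/orP; right;
    apply/mapP; exists b; rewrite ?mem_enum.
- case: z => [|[C2 b] t2] // /and3P[_ /eqP-> _].
  by rewrite /candidates mem_cat; apply/orP; left; apply/mapP; exists (C2, b);
    rewrite ?mem_enum.
- case: z => [|[C1 a] t] //; case: r => [|[C2 b] t2] //.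
  case/and4P=> /eqP-> /eqP-> /eqP-> _.
  by rewrite /candidates mem_cat inE; apply/orP; right; apply/orP; right;
    apply/mapP; exists a; rewrite ?mem_enum.
- case: r => [|[C2 b] t2] // /and3P[_ /eqP-> _].
  by rewrite /candidates mem_cat inE eqxx orbT.
Qed.

Lemma mem_ball_step rho S z :
  (z \in ball_step A rho S) = (z \in S) || has (fun r => adjX A rho r z) S.
Proof.
rewrite /ball_step mem_undup mem_cat; congr (_ || _).
apply/flattenP/hasP => [[_ /mapP[r rS ->]]|[r rS Hrz]].
  by rewrite mem_filter => /andP[Hrz _]; exists r.
exists (neighbours A rho r); first exact: map_f.
by rewrite mem_filter Hrz (candidates_adjX Hrz).
Qed.

Lemma eq_ball_step rho S T : S =i T -> ball_step A rho S =i ball_step A rho T.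
Proof. by move=> eST z; rewrite !mem_ball_step eST (eq_has_r eST). Qed.

Lemma ball_step_Xaut rho f g S : is_Xaut rho f g -> all (validstr A rho) S ->
  ball_step A rho (map f S) =i map f (ball_step A rho S).
Proof.
move=> fX VS; have [_ gV _ fg _] := fX.
move=> z; rewrite mem_ball_step; apply/orP/mapP.
- case=> [/mapP[w wS ->]|/hasP[_ /mapP[r rS ->] Hrz]].
    by exists w; rewrite // mem_ball_step wS.
  have /andP[_ Vz] := adjX_valid Hrz.
  exists (g z); last by rewrite fg.
  by rewrite mem_ball_step; apply/orP; right; apply/hasP; exists r;
    rewrite // -(adjX_Xaut fX) ?fg ?gV // (allP VS).
case=> w; rewrite mem_ball_step => /orP[wS ->|/hasP[r rS Hrw] ->].
  by left; exact: map_f.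
have /andP[_ Vw] := adjX_valid Hrw.
by right; apply/hasP; exists (f r); rewrite ?map_f ?(adjX_Xaut fX) // (allP VS).
Qed.

Lemma mem_ball0 rho x y z : (z \in ball A rho 0 x y) = (z == x) || (z == y).
Proof. by rewrite mem_undup !inE. Qed.

Lemma ball_uniq rho k x y : uniq (ball A rho k x y).
Proof. by case: k => [|k]; rewrite /ball ?iterS undup_uniq. Qed.

Lemma ball_valid rho k x y : validstr A rho x -> validstr A rho y ->
  all (validstr A rho) (ball A rho k x y).
Proof.
move=> Vx Vy; elim: k => [|k IH].
  by apply/allP=> z; rewrite mem_ball0 => /orP[] /eqP->.
apply/allP=> z; rewrite /ball iterS mem_ball_step.
by case/orP=> [/(allP IH)|/hasP[r _ /adjX_valid/andP[]]].
Qed.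

Lemma mem_ball_ends rho k x y : (x \in ball A rho k x y) && (y \in ball A rho k x y).
Proof.
elim: k => [|k /andP[IHx IHy]]; first by rewrite !mem_ball0 !eqxx orbT.
by rewrite /ball iterS !mem_ball_step -/(ball A rho k x y) IHx IHy.
Qed.

Lemma ball_Xaut rho k f g x y x' y' : is_Xaut rho f g ->
  validstr A rho x -> validstr A rho y ->
  (f x = x' /\ f y = y') \/ (f x = y' /\ f y = x') ->
  ball A rho k x' y' =i map f (ball A rho k x y).
Proof.
move=> fX Vx Vy exy; elim: k => [|k IH] z.
  rewrite mem_ball0; apply/idP/mapP => [|[w]].
    by case: exy => -[<- <-] /orP[] /eqP->; [exists x|exists y|exists y|exists x];
      rewrite // mem_ball0 eqxx ?orbT.
  rewrite mem_ball0 => /orP[] /eqP-> ->;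
    by case: exy => -[fx fy]; rewrite ?fx ?fy eqxx ?orbT.
rewrite /ball !iterS -/(ball A rho k x y) -/(ball A rho k x' y').
by rewrite (eq_ball_step _ IH) (ball_step_Xaut fX) // ball_valid.
Qed.

Lemma nbhd_iso_Xaut rho k f g x y x' y' : is_Xaut rho f g ->
  validstr A rho x -> validstr A rho y ->
  (f x = x' /\ f y = y') \/ (f x = y' /\ f y = x') ->
  nbhd_iso A rho (ball A rho k x y) (ball A rho k x' y') x y x' y'.
Proof.
move=> fX Vx Vy exy; have [_ _ gf _ fadj] := fX.
have BV := ball_valid k Vx Vy.
have f_inj : {in ball A rho k x y &, injective f}.
  by move=> s1 s2 /(allP BV) V1 /(allP BV) V2 e12; rewrite -(gf _ V1) e12 gf.
exists f; split=> //.
- apply: uniq_perm; last by move=> z; rewrite (ball_Xaut k fX Vx Vy exy).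
    by rewrite map_inj_in_uniq ?ball_uniq.
  exact: ball_uniq.
- by move=> s1 s2 /(allP BV) V1 /(allP BV) V2 C; apply: fadj.
Qed.

Lemma has_type_adjC rho C u v x y : has_type A rho C u v x y -> adjC A rho C x y.
Proof. by move=> H; apply/existsP; exists u; apply/existsP; exists v. Qed.

Lemma lastv_typed rho C u v (x y : str) : typed rho C u v x y ->
  lastv rho x = u /\ lastv rho y = v.
Proof.
case/or3P=> [/andP[/eqP-> /eqP->]|/existsP[C' /and3P[_ /eqP ex /eqP->]]|
             /and3P[/eqP-> /eqP-> /eqP->]] //=.
by rewrite ex.
Qed.

Lemma has_type_oriented rho C u v x y : has_type A rho C u v x y ->
  exists a b, [/\ adjC A rho C a b, lastv rho a = u, lastv rho b = v &
                  (a = x /\ b = y) \/ (a = y /\ b = x)].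
Proof.
move=> H; have Hxy := has_type_adjC H; have Hyx : adjC A rho C y x by rewrite adjC_sym.
case/orP: H => /and4P[_ _ _ /orP[]] /lastv_typed[lx ly].
- by exists x, y; split=> //; left.
- by exists y, x; split=> //; right.
- by exists y, x; split=> //; right.
- by exists x, y; split=> //; left.
Qed.

Lemma has_type_nbhd_iso rho k C u v x y x' y' :
  has_type A rho C u v x y -> has_type A rho C u v x' y' ->
  nbhd_iso A rho (ball A rho k x y) (ball A rho k x' y') x y x' y'.
Proof.
move=> Hxy /has_type_oriented[a' [b' [Hab' la' lb' exy']]].
have /andP[Vx Vy] := adjC_valid (has_type_adjC Hxy).
have [a [b [Hab la lb exy]]] := has_type_oriented Hxy.
have [f [g [fX fa fb]]] :=
  edge_Xaut Hab Hab' (etrans la (esym la')) (etrans lb (esym lb')).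
apply: (nbhd_iso_Xaut _ fX Vx Vy).
by case: exy => -[<- <-]; case: exy' => -[<- <-]; rewrite fa fb; auto.
Qed.

End AdditiveProductGraph.
Local Open Scope ring_scope.

Lemma sumr_ltn_sym (R : nmodType) N (G : 'I_N -> 'I_N -> R) :
  (forall i k, G i k = G k i) ->
  \sum_(i < N) \sum_(k < N) G i k =
  (\sum_(i < N) \sum_(k < N | (i < k)%N) G i k) *+ 2 + \sum_(i < N) G i i.
Proof.
move=> Gs.
have split_row i : \sum_(k < N) G i k =
    \sum_(k < N | (i < k)%N) G i k + \sum_(k < N | (k < i)%N) G i k + G i i.
  rewrite (bigID (fun k : 'I_N => (i < k)%N)) /= -addrA; congr (_ + _).
  rewrite (bigD1 i) ?ltnn //= addrC; congr (_ + _).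
  by apply: eq_bigl => k; rewrite -leqNgt [RHS]ltn_neqAle andbC.
have lower : \sum_(i < N) \sum_(k < N | (k < i)%N) G i k =
             \sum_(i < N) \sum_(k < N | (i < k)%N) G i k.
  rewrite (exchange_big_dep predT) //=; apply: eq_bigr => i _.
  by apply: eq_big => // k; rewrite Gs.
by rewrite (eq_bigr _ (fun i _ => split_row i)) !big_split /= lower mulr2n.
Qed.

(* The sum over [i < k] is recovered from the full sum and the diagonal, both
   of which are invariant under [s]; halving needs characteristic [0]. *)
Lemma sumr_ltn_perm (R : numDomainType) N (G : 'I_N -> 'I_N -> R) (s : {perm 'I_N}) :
  (forall i k, G i k = G k i) ->
  \sum_(i < N) \sum_(k < N | (i < k)%N) G (s i) (s k) =
  \sum_(i < N) \sum_(k < N | (i < k)%N) G i k.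
Proof.
move=> Gs; have sum_perm (F : 'I_N -> R) : \sum_(i < N) F (s i) = \sum_(i < N) F i.
  by rewrite [RHS](reindex_inj (@perm_inj _ s)).
apply: (@pmulrnI _ 2) => //; apply: (addIr (\sum_(i < N) G i i)).
rewrite -[in LHS](sum_perm (fun i => G i i)).
rewrite -(@sumr_ltn_sym _ _ (fun i k => G (s i) (s k))) => [|i k]; last exact: Gs.
rewrite -(sumr_ltn_sym Gs) -(sum_perm (fun i => \sum_(k < N) G i k)).
by apply: eq_bigr => i _; exact: (sum_perm (G (s i))).
Qed.

Lemma bitE N (z : {ffun 'I_N -> bool}) (i : 'I_N) : bit z i = z i.
Proof.
apply/existsP/idP => [[j /andP[/eqP/val_inj-> //]]|zi].
by exists i; rewrite eqxx.
Qed.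

Section Relabel.

Variables (R : realType) (c p N : nat) (E E' : 'I_c -> 'I_N -> 'I_N -> bool).
Variables (gamma : 'I_p -> 'I_c -> R) (beta : 'I_p -> R) (s : {perm 'I_N}).
Hypotheses (E'_sym : forall C i k, E' C i k = E' C k i)
           (E'_perm : forall C i k, E' C (s i) (s k) = E C i k).

Definition relabel (z : {ffun 'I_N -> bool}) : {ffun 'I_N -> bool} :=
  [ffun i => z (s i)].

Lemma relabel_inj : injective relabel.
Proof.
move=> z1 z2 /ffunP e; apply/ffunP => i.
by have := e (s^-1%g i); rewrite !ffunE permKV.
Qed.

Lemma costval_relabel j z : costval E' gamma j z = costval E gamma j (relabel z).
Proof.
congr (- _); apply: eq_bigr => C _.
pose G i k := (E' C i k)%:R * gamma j C * spin R (z i) * spin R (z k).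
rewrite -(@sumr_ltn_perm _ _ G s) => [|i k]; last by rewrite /G E'_sym mulrAC.
by apply: eq_bigr => i _; apply: eq_bigr => k _; rewrite /G !ffunE E'_perm.
Qed.

Lemma layer_relabel j (psi psi' : state R N) :
  (forall z, psi z = psi' (relabel z)) -> forall z,
  mixer_op beta j (phase_op E' gamma j psi) z =
  mixer_op beta j (phase_op E gamma j psi') (relabel z).
Proof.
move=> Hpsi z; rewrite !ffunE [RHS](reindex_inj relabel_inj).
apply: eq_bigr => z' _; rewrite !ffunE costval_relabel Hpsi; congr (_ * _).
by rewrite [LHS](reindex_inj (@perm_inj _ s)); apply: eq_bigr => i _; rewrite !ffunE.
Qed.

Lemma layers_relabel l (psi psi' : state R N) :
  (forall z, psi z = psi' (relabel z)) -> forall z,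
  foldl (fun psi j => mixer_op beta j (phase_op E' gamma j psi)) psi l z =
  foldl (fun psi j => mixer_op beta j (phase_op E gamma j psi)) psi' l (relabel z).
Proof. by elim: l psi psi' => [|j l IH] psi psi' Hpsi //=; exact/IH/layer_relabel. Qed.

Lemma qaoa_state_relabel z :
  qaoa_state E' gamma beta z = qaoa_state E gamma beta (relabel z).
Proof. by apply: layers_relabel => z0; rewrite !ffunE. Qed.

Lemma ZZ_expect_relabel (i k : 'I_N) :
  ZZ_expect E gamma beta i k = ZZ_expect E' gamma beta (s i) (s k).
Proof.
rewrite /ZZ_expect [LHS](reindex_inj relabel_inj); apply: eq_bigr => z _.
by rewrite qaoa_state_relabel !bitE !ffunE.
Qed.

End Relabel.

Lemma ZZ_expect_sym (R : realType) c p N (E : 'I_c -> 'I_N -> 'I_N -> bool)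
    (gamma : 'I_p -> 'I_c -> R) beta i k :
  ZZ_expect E gamma beta i k = ZZ_expect E gamma beta k i.
Proof. by apply: eq_bigr => z _; rewrite mulrAC. Qed.

Lemma ZZ_expect_iso (R : realType) c p N N' (E : 'I_c -> 'I_N -> 'I_N -> bool)
    (E' : 'I_c -> 'I_N' -> 'I_N' -> bool) (gamma : 'I_p -> 'I_c -> R) beta
    (h : 'I_N -> 'I_N') :
  N = N' -> injective h -> (forall C i k, E' C i k = E' C k i) ->
  (forall C i k, E' C (h i) (h k) = E C i k) ->
  forall i k : 'I_N, ZZ_expect E gamma beta i k = ZZ_expect E' gamma beta (h i) (h k).
Proof.
move=> eN; subst N' => h_inj E'_sym E'_h i k.
by rewrite -!(permE h_inj); apply: ZZ_expect_relabel => // C i' k'; rewrite !permE.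
Qed.

Lemma ZZ_expect_seq_iso (R : realType) c p (T : eqType) (d : T)
    (adj : 'I_c -> T -> T -> bool) (gamma : 'I_p -> 'I_c -> R) beta
    (B B' : seq T) (f : T -> T) x y x' y' :
  uniq B -> uniq B' -> {in B &, injective f} -> perm_eq (map f B) B' ->
  {in B &, forall a b C, adj C (f a) (f b) = adj C a b} ->
  (forall C a b, adj C a b = adj C b a) ->
  x \in B -> y \in B -> (f x = x' /\ f y = y') \/ (f x = y' /\ f y = x') ->
  ZZ_expect (fun C (i k : 'I_(size B)) => adj C (nth d B i) (nth d B k))
     gamma beta (index x B) (index y B) =
  ZZ_expect (fun C (i k : 'I_(size B')) => adj C (nth d B' i) (nth d B' k))
     gamma beta (index x' B') (index y' B').
Proof.
move=> uB uB' f_inj fB fadj adj_sym xB yB exy.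
have fBB' a : a \in B -> f a \in B' by move=> aB; rewrite -(perm_mem fB) map_f.
have nthB (i : 'I_(size B)) : nth d B i \in B := mem_nth d (ltn_ord i).
have hB (i : 'I_(size B)) : (index (f (nth d B i)) B' < size B')%N.
  by rewrite index_mem fBB'.
pose h i := Ordinal (hB i).
have nth_h i : nth d B' (h i) = f (nth d B i) by rewrite nth_index ?fBB'.
have h_inj : injective h.
  move=> i j /(congr1 (nth d B' \o val)); rewrite /= !nth_h => /f_inj.
  by move=> /(_ (nthB i) (nthB j)) /eqP; rewrite nth_uniq // => /eqP /val_inj.
pose EB C (i k : 'I_(size B)) := adj C (nth d B i) (nth d B k).
pose EB' C (i k : 'I_(size B')) := adj C (nth d B' i) (nth d B' k).
have EB'_sym C i k : EB' C i k = EB' C k i by rewrite /EB' adj_sym.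
have EB'_h C i k : EB' C (h i) (h k) = EB C i k by rewrite /EB' !nth_h fadj.
have eN : size B = size B' by rewrite -(perm_size fB) size_map.
have ix : (index x B < size B)%N by rewrite index_mem.
have iy : (index y B < size B)%N by rewrite index_mem.
have index_h a (ia : (index a B < size B)%N) : index (f a) B' = h (Ordinal ia).
  by rewrite /= nth_index // -index_mem.
suff -> : ZZ_expect EB gamma beta (index x B) (index y B) =
          ZZ_expect EB' gamma beta (index (f x) B') (index (f y) B').
  by case: exy => -[-> ->] //; exact: ZZ_expect_sym.
rewrite (index_h x ix) (index_h y iy).
exact: (ZZ_expect_iso gamma beta eN h_inj EB'_sym EB'_h (Ordinal ix) (Ordinal iy)).
Qed.

Theorem mainTheorem1 (R : realType) (n c : nat) (A : 'I_c -> rel 'I_n) (v1 : 'I_n)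
  (c_gt0 : (0 < c)%N)
  (A_sym : forall C : 'I_c, symmetric (A C))
  (A_irr : forall C : 'I_c, irreflexive (A C))
  (A_nonempty : forall C : 'I_c, exists u v : 'I_n, A C u v)
  (A_conn : forall (C : 'I_c) (u w : 'I_n),
      in_under A C u -> in_under A C w -> connect (A C) u w)
  (U_conn : forall u w : 'I_n,
      connect (fun a b => [exists C : 'I_c, A C a b]) u w)
  (p : nat) (p_gt0 : (0 < p)%N)
  (gamma : 'I_p -> 'I_c -> R) (beta : 'I_p -> R)
  (gamma_rng : forall j C, 0 <= gamma j C <= 2 * pi)
  (beta_rng : forall j, 0 <= beta j <= 2 * pi)
  (C : 'I_c) (u v : 'I_n) (uv_edge : A C u v) :
  forall x y x' y' : str n c,
    has_type A v1 C u v x y -> has_type A v1 C u v x' y' ->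
    X_ZZ A v1 gamma beta x y = X_ZZ A v1 gamma beta x' y' /\
    nbhd_iso A v1 (ball A v1 p x y) (ball A v1 p x' y') x y x' y'.
Proof.
move=> x y x' y' Hxy Hxy'.
have iso := has_type_nbhd_iso A_sym A_irr p Hxy Hxy'.
split=> //; case: iso => f [f_inj fB fadj exy].
have /andP[xB yB] := mem_ball_ends A v1 p x y.
apply: (ZZ_expect_seq_iso [::] gamma beta _ _ f_inj fB fadj _ xB yB exy);
  try exact: ball_uniq.
by move=> C' a b; apply: adjC_sym.
Qed.
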